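(* The class of multi-modal antitone algebras is closed under canonical extensions: if $M=\langle A,\{\Box_b\}_{b\in B}\rangle$ is a multi-modal antitone algebra, then $\mathrm{Em}(M)=\langle\mathcal{P}(\mathrm{Ul}(A)),\{[Q_b]\}_{b\in B}\rangle$, with the operator $[Q_b]$ indexed by $\varphi(b)\in\varphi[B]$ (a Boolean subalgebra of $\mathcal{P}(\mathrm{Ul}(A))$), is a multi-modal antitone algebra.
   Context: A multi-modal antitone algebra is $\langle A,\{\Box_b\}_{b\in B}\rangle$ where $A$ is a Boolean algebra, $B$ is a Boolean subalgebra of $A$, and each $\Box_b\colon A\to A$ satisfies $\Box_b(1)=1$, $\Box_b(a\wedge c)=\Box_b(a)\wedge\Box_b(c)$, and $\Box_{b_1\vee b_2}(a)\le\Box_{b_1}(a)\wedge\Box_{b_2}(a)$ for all $a,c\in A$, $b,b_1,b_2\in B$. $\mathrm{Ul}(A)$ is the set of ultrafilters of $A$, $\varphi(a)=\{u\in\mathrm{Ul}(A):a\in u\}$. For $b\in B$ and $u,v\in\mathrm{Ul}(A)$: $Q_b(u,v)$ iff $\Box_b^{-1}[u]=\{a\in A:\Box_b(a)\in u\}\subseteq v$; $Q_b(u)=\{v:Q_b(u,v)\}$; and for $X\subseteq\mathrm{Ul}(A)$, $[Q_b](X)=\{u: Q_b(u)\subseteq X\}$. *)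

From HB Require Import structures.
From mathcomp Require Import all_boot all_order.
From mathcomp Require Import classical_sets.
Set Implicit Arguments. Unset Strict Implicit. Unset Printing Implicit Defensive.
Import Order.TTheory.
Local Open Scope classical_set_scope.

(* Boolean algebras are MathComp's complemented distributive lattices
   with top and bottom (ctbDistrLatticeType).  For any type T, the
   powerset [set T] is canonically such a lattice (classical_sets). *)

Section Defs.
Context {d : Order.disp_t} {A : ctbDistrLatticeType d}.

Definition boolean_subalgebra (B : set A) : Prop :=
  B \bot%O /\ B \top%O /\
  (forall x y, B x -> B y -> B (Order.meet x y)) /\
  (forall x y, B x -> B y -> B (Order.join x y)) /\
  (forall x, B x -> B (Order.compl x)).

(* multi-modal antitone algebra <A, {box b}_{b in B}>; box is only
   constrained on indices b in B *)
Definition multimodal_antitone (B : set A) (box : A -> A -> A) : Prop :=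
  boolean_subalgebra B /\
  (forall b, B b -> box b \top%O = \top%O) /\
  (forall b a c, B b -> box b (Order.meet a c) = Order.meet (box b a) (box b c)) /\
  (forall b1 b2 a, B b1 -> B b2 ->
     (box (Order.join b1 b2) a <= Order.meet (box b1 a) (box b2 a))%O).

Definition is_filter (F : set A) : Prop :=
  F \top%O /\
  (forall a c, F a -> F c -> F (Order.meet a c)) /\
  (forall a c, F a -> (a <= c)%O -> F c).

Definition proper_filter (F : set A) : Prop := is_filter F /\ ~ F \bot%O.

Definition ultrafilter (F : set A) : Prop :=
  proper_filter F /\
  (forall G : set A, proper_filter G -> F `<=` G -> G = F).

End Defs.

Definition Ul {d} (A : ctbDistrLatticeType d) : Type := {u : set A | ultrafilter u}.

Definition phi {d} {A : ctbDistrLatticeType d} (a : A) : set (Ul A) :=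
  [set u | proj1_sig u a].

Definition Qrel {d} {A : ctbDistrLatticeType d} (box : A -> A -> A) (b : A)
  (u v : Ul A) : Prop :=
  [set a | proj1_sig u (box b a)] `<=` proj1_sig v.

Definition boxQ {d} {A : ctbDistrLatticeType d} (box : A -> A -> A) (b : A)
  (X : set (Ul A)) : set (Ul A) :=
  [set u | forall v, Qrel box b u v -> X v].

From mathcomp Require Import all_boot all_order.
From mathcomp Require Import boolp classical_sets.
Set Implicit Arguments. Unset Strict Implicit. Unset Printing Implicit Defensive.
Import Order.Theory.
Local Open Scope classical_set_scope.

(* By the ultrafilter lemma the Stone map phi is an injective Boolean
   homomorphism, so phi[B] is a Boolean subalgebra and phi b |-> [Q_b] is
   well defined on it.  Each [Q_b] is the box of a Kripke relation, hence
   preserves the top and binary meets.  Finally, box_b <= box_b' pointwise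
   gives Q_b' <= Q_b and hence [Q_b] <= [Q_b']; applied to
   box_(b1 \/ b2) <= box_b1, box_b2 this yields the antitonicity axiom. *)

Section Filters.
Context {d : Order.disp_t} {A : ctbDistrLatticeType d}.
Implicit Types (F : set A) (a c x : A).

Lemma filterT F : is_filter F -> F \top%O.
Proof. by case. Qed.

Lemma filterI F a c : is_filter F -> F a -> F c -> F (a `&` c)%O.
Proof. by move=> [_ [FI _]]; apply: FI. Qed.

Lemma filterS F a c : is_filter F -> (a <= c)%O -> F a -> F c.
Proof. by move=> [_ [_ FS]] ac /FS; apply. Qed.

Lemma filter_adjoin F a :
  is_filter F -> is_filter [set c | exists2 f, F f & (f `&` a <= c)%O].
Proof.
move=> F_filter; split; first by exists \top%O; [exact: filterT | exact: lex1].
split=> [c1 c2 [f1 Ff1 le1] [f2 Ff2 le2] | c1 c2 [f Ff le1] c12].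
  exists (f1 `&` f2)%O; first exact: filterI.
  rewrite lexI (le_trans _ le1) ?(le_trans _ le2) // leI2 //; [exact: leIr | exact: leIl].
by exists f => //; apply: le_trans c12.
Qed.

Lemma ultrafilter_compl F a : ultrafilter F -> F a \/ F (~` a)%O.
Proof.
move=> [[F_filter F_proper] Fmax].
(* Either the filter generated by F and a is proper, hence equal to F by
   maximality, or some f in F is disjoint from a, i.e. f <= ~` a. *)
pose G := [set c | exists2 f, F f & (f `&` a <= c)%O].
have [[f Ff]|G_proper] := pselect (G \bot%O).
  by rewrite lex0 disj_leC => /(filterS F_filter)/(_ Ff); right.
left; have <- : G = F.
  by apply: Fmax; [split; [exact: filter_adjoin|] | move=> c Fc; exists c => //; exact: leIl].
by exists \top%O; [exact: filterT | rewrite meet1x].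
Qed.

(* The principal filter of x is adjoined so that the empty chain has an
   upper bound too. *)
Lemma proper_filter_chain_ub x (C : set (set A)) :
  x <> \bot%O -> (forall F, C F -> proper_filter F /\ F x) -> total_on C subset ->
  proper_filter ([set c | (x <= c)%O] `|` \bigcup_(F in C) F).
Proof.
move=> x_neq0 C_filters C_chain.
have C_filter F : C F -> is_filter F by case/C_filters => [[]].
have up_in F c : C F -> (x <= c)%O -> F c.
  by move=> CF /filterS; apply; [exact: C_filter | case: (C_filters F CF)].
split; last by case=> [/=|[F /C_filters[[_ F_proper] _]]] //; rewrite lex0 => /eqP.
split; first by left; exact: lex1.
split=> [c1 c2 [x1|[F CF Fc1]] [x2|[G CG Gc2]] | c1 c2 [x1|[F CF Fc1]] c12].
- by left; rewrite /= lexI x1 x2.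
- by right; exists G => //; exact: filterI (C_filter G CG) (up_in G c1 CG x1) Gc2.
- by right; exists F => //; exact: filterI (C_filter F CF) Fc1 (up_in F c2 CF x2).
- have [FG|GF] := C_chain F G CF CG.
    by right; exists G => //; exact: filterI (C_filter G CG) (FG _ Fc1) Gc2.
  by right; exists F => //; exact: filterI (C_filter F CF) Fc1 (GF _ Gc2).
- by left; apply: le_trans c12.
- by right; exists F => //; exact: filterS (C_filter F CF) c12 Fc1.
Qed.

Lemma ultrafilter_exists x : x <> \bot%O -> exists2 u : set A, ultrafilter u & u x.
Proof.
move=> x_neq0; pose T := {F : set A | proper_filter F /\ F x}.
have [| | | |[M [M_proper Mx]] Mmax] := @Zorn T (fun F G : T => `[< sval F `<=` sval G >]).
- by move=> F; apply/asboolP.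
- by move=> F G H /asboolP FG /asboolP GH; apply/asboolP => a /FG /GH.
- by move=> [F ?] [G ?] /asboolP FG /asboolP GF; apply/eq_exist/seteqP.
- move=> C C_chain.
  pose U := [set c | (x <= c)%O] `|` \bigcup_(F in sval @` C) F.
  have U_proper : proper_filter U.
    apply: (proper_filter_chain_ub x_neq0) => [_ [F _ <-] | _ _ [F CF <-] [G CG <-]].
      exact: (proj2_sig F).
    by case: (C_chain F G CF CG) => /asboolP; [left | right].
  have Ux : U x by left; rewrite /= lexx.
  exists (exist _ U (conj U_proper Ux)) => F CF.
  by apply/asboolP => a Fa; right; exists (sval F) => //; exists F.
- exists M => //; split=> // G G_proper MG.
  by have /(_ (asboolT MG))/(congr1 sval) := Mmax (exist _ G (conj G_proper (MG x Mx))).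
Qed.

End Filters.

Lemma boolean_subalgebra_image {d d' : Order.disp_t}
    {A : ctbDistrLatticeType d} {A' : ctbDistrLatticeType d'} (f : A -> A') (B : set A) :
  f \bot%O = \bot%O -> f \top%O = \top%O -> {morph f : x y / (x `&` y)%O} ->
  {morph f : x y / (x `|` y)%O} -> {morph f : x / (~` x)%O} ->
  boolean_subalgebra B -> boolean_subalgebra (f @` B).
Proof.
move=> f0 f1 fI fU fC [B0 [B1 [BI [BU BC]]]].
split; first by exists \bot%O.
split; first by exists \top%O.
split; first by move=> _ _ [x Bx <-] [y By <-]; exists (x `&` y)%O; [exact: BI | exact: fI].
split; first by move=> _ _ [x Bx <-] [y By <-]; exists (x `|` y)%O; [exact: BU | exact: fU].
by move=> _ [x Bx <-]; exists (~` x)%O; [exact: BC | exact: fC].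
Qed.

Section StoneMap.
Context {d : Order.disp_t} {A : ctbDistrLatticeType d}.
Implicit Types (a c : A) (u : Ul A).

Lemma Ul_filter u : is_filter (sval u).
Proof. by case: (proj2_sig u) => [[]]. Qed.

Lemma Ul_proper u : ~ sval u \bot%O.
Proof. by case: (proj2_sig u) => [[]]. Qed.

Lemma phiT : phi (\top%O : A) = setT.
Proof. by apply/seteqP; split=> u //= _; exact: filterT (Ul_filter u). Qed.

Lemma phi0 : phi (\bot%O : A) = set0.
Proof. by apply/seteqP; split=> u //=; exact: Ul_proper. Qed.

Lemma phiI a c : phi (a `&` c)%O = phi a `&` phi c.
Proof.
apply/seteqP; split=> u /=; last by case; exact: filterI (Ul_filter u).
by move=> uac; split; apply: filterS (Ul_filter u) _ uac; [exact: leIl | exact: leIr].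
Qed.

Lemma phiC a : phi (~` a)%O = ~` phi a.
Proof.
apply/seteqP; split=> u /=; last by case: (ultrafilter_compl a (proj2_sig u)).
move=> ua' ua; apply: (@Ul_proper u); rewrite -(meetxC a).
exact: filterI (Ul_filter u) ua ua'.
Qed.

Lemma phiU a c : phi (a `|` c)%O = phi a `|` phi c.
Proof. by rewrite -[RHS]setCK setCU -!phiC -phiI -complU phiC setCK. Qed.

Lemma phi_le a c : phi a `<=` phi c -> (a <= c)%O.
Proof.
move=> ac; rewrite -[c]complK -disj_leC; apply/eqP.
apply: contrapT => /ultrafilter_exists[u u_uf uac].
pose v : Ul A := exist _ u u_uf.
have /ac vc : phi a v by apply: filterS (Ul_filter v) _ uac; exact: leIl.
have : phi (~` c)%O v by apply: filterS (Ul_filter v) _ uac; exact: leIr.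
by rewrite phiC.
Qed.

Lemma phi_inj : injective (@phi _ A).
Proof. by move=> a c ac; apply: le_anti; rewrite !phi_le // ac. Qed.

End StoneMap.

Section CanonicalExtension.
Context {d : Order.disp_t} {A : ctbDistrLatticeType d} (box : A -> A -> A).
Implicit Types (b : A) (X Y : set (Ul A)).

Lemma boxQT b : boxQ box b setT = setT.
Proof. by apply/seteqP; split. Qed.

Lemma boxQI b X Y : boxQ box b (X `&` Y) = boxQ box b X `&` boxQ box b Y.
Proof.
apply/seteqP; split=> u /=; first by move=> uXY; split=> v /uXY[].
by move=> [uX uY] v Quv; split; [exact: uX | exact: uY].
Qed.

Lemma boxQ_subset b b' X :
  (forall a, (box b a <= box b' a)%O) -> boxQ box b X `<=` boxQ box b' X.
Proof.
move=> le_box u uX v Q'uv; apply: uX => a ua; apply: Q'uv.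
exact: filterS (Ul_filter u) (le_box a) ua.
Qed.

(* Off the range of phi the operator is the constant setT; only its values
   on phi[B] are constrained. *)
Definition em_box X : set (Ul A) -> set (Ul A) :=
  fun Y => [set u | forall b, phi b = X -> boxQ box b Y u].

Lemma em_box_phi b : em_box (phi b) = boxQ box b.
Proof.
apply: funext => Y; apply/seteqP; split=> u /=; first exact.
by move=> uY b' /phi_inj ->.
Qed.

Lemma multimodal_antitone_em B :
  multimodal_antitone B box -> multimodal_antitone (phi @` B) em_box.
Proof.
move=> [B_sub [_ [_ box_anti]]]; split.
  exact: boolean_subalgebra_image phi0 phiT phiI phiU phiC B_sub.
split; first by move=> _ [b _ <-]; rewrite em_box_phi; exact: boxQT.
split; first by move=> _ X Y [b _ <-]; rewrite em_box_phi; exact: boxQI.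
move=> _ _ X [b1 Bb1 <-] [b2 Bb2 <-].
have le_box a : (box (b1 `|` b2)%O a <= box b1 a)%O /\ (box (b1 `|` b2)%O a <= box b2 a)%O.
  by apply/andP; rewrite -lexI; exact: box_anti.
rewrite joinEset -phiU !em_box_phi meetEset; apply/subsetPset; rewrite subsetI.
by split; apply: boxQ_subset => a; case: (le_box a).
Qed.

End CanonicalExtension.

Theorem theorem3p3 (d : Order.disp_t) (A : ctbDistrLatticeType d)
  (B : set A) (box : A -> A -> A) :
  multimodal_antitone B box ->
  exists box' : set (Ul A) -> set (Ul A) -> set (Ul A),
    (forall b, B b -> box' (phi b) = boxQ box b) /\
    multimodal_antitone (phi @` B) box'.
Proof.
move=> box_anti; exists (em_box box); split=> [b _ | ].
  exact: em_box_phi.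
exact: multimodal_antitone_em box_anti.
Qed.
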